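(* Let $w\in S_\infty$ with $\operatorname{len} w=m$. Then (i) $\varphi(\delta_w)\in\operatorname{span}\{\delta_u : u\in L_m(BC*S_\infty)\}$; and (ii) for each $y\in L_m(S_\infty)$ we have $\langle \varphi(\delta_y),\delta_w'\rangle\neq 0$ if and only if $y=w$.
   Context: $BC$ is the bicyclic monoid $\langle p,q : pq=e\rangle$ with involution $p^*=q$. $S_\infty$ is the free monoid on $\{t_n,t_n^*: n\in\mathbb{N}\}$ with involution $t_n\mapsto t_n^*$. $BC*S_\infty$ is the free product of monoids, with the involution $(s_1t_1\cdots s_nt_n)^*=t_n^*s_n^*\cdots t_1^*s_1^*$; $S_\infty$ is regarded as a submonoid of it. For a monoid $S$ with involution, $\mathbb{C}S$ is the semigroup algebra with basis $\{\delta_s:s\in S\}$, $\delta_s\delta_t=\delta_{st}$, $\delta_s^*=\delta_{s^*}$; for $s\in S$, $\delta_s'$ is the linear functional on $\mathbb{C}S$ with $\langle\delta_t,\delta_s'\rangle=1$ if $t=s$ and $0$ otherwise. Length: every $u\in BC*S_\infty\setminus\{e\}$ has a unique expression $u=w_1\cdots w_n$ with $n\in\mathbb{N}$, $w_i\in (BC\setminus\{e\})\cup\{t_j,t_j^*: j\in\mathbb{N}\}$, and $w_{i+1}\in\{t_j,t_j^*:j\in\mathbb{N}\}$ whenever $w_i\in BC\setminus\{e\}$; set $\operatorname{len}u=n$ and $\operatorname{len}e=0$. For $m\in\mathbb{N}_0$, $L_m(BC*S_\infty)=\{u\in BC*S_\infty:\operatorname{len}u\le m\}$ and $L_m(S_\infty)=\{u\in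 S_\infty:\operatorname{len}u\le m\}$. Fix a C*-norm $\|\cdot\|$ on $\mathbb{C}(BC*S_\infty)$ (i.e. a norm whose completion is a C*-algebra containing $\mathbb{C}(BC*S_\infty)$ as a $*$-subalgebra). Let $\gamma_n=(n\|\delta_{t_n}\|)^{-1}$ and $a_n=\delta_p+\gamma_n\delta_{t_n}$ for $n\in\mathbb{N}$, and let $\varphi:\mathbb{C}S_\infty\to\mathbb{C}(BC*S_\infty)$ be the unique unital $*$-homomorphism with $\varphi(\delta_{t_n})=a_n$ for all $n\in\mathbb{N}$. *)

From HB Require Import structures.
From mathcomp Require Import all_boot all_order all_algebra.
From mathcomp Require Import finmap.
From mathcomp Require Import monalg.
From mathcomp Require Import complex.
From mathcomp Require Import Rstruct.
From Stdlib Require Rdefinitions.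

Set Implicit Arguments.
Unset Strict Implicit.
Unset Printing Implicit Defensive.

Import Order.TTheory GRing.Theory Num.Theory.
Local Open Scope ring_scope.

Notation Rr := Rdefinitions.R.
Notation CC := (Rr[i]).

Record invMonoid := InvMonoid {
  im_carrier :> choiceType;
  im_one : im_carrier;
  im_mul : im_carrier -> im_carrier -> im_carrier;
  im_star : im_carrier -> im_carrier }.

Definition salg (S : invMonoid) := {malg CC[S]}.

Section SemigroupAlgebra.
Variable S : invMonoid.

Definition delta (s : S) : salg S := mkmalgU s 1.

Definition amul (f g : salg S) : salg S :=
  \sum_(s <- msupp f) \sum_(t <- msupp g) mkmalgU (im_mul s t) (mcoeff s f * mcoeff t g).

Definition astar (f : salg S) : salg S :=
  \sum_(s <- msupp f) mkmalgU (im_star s) (mcoeff s f)^*.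

Definition aone : salg S := delta (im_one S).

(* <x, delta_s'> : the coefficient of delta_s in x *)
Definition dual_delta (s : S) (x : salg S) : CC := mcoeff s x.

Definition in_span (P : S -> Prop) (x : salg S) : Prop :=
  exists l : seq (CC * S),
    (forall cu, cu \in l -> P cu.2) /\ x = \sum_(cu <- l) cu.1 *: delta cu.2.

(* C*-norm on CS (pre-C*-norm: a norm, submultiplicative, with the
   C*-identity; equivalently its completion is a C*-algebra containing
   CS as a *-subalgebra). *)
Definition is_Cstar_norm (N : salg S -> Rr) : Prop :=
  (forall x, 0 <= N x) /\
  (forall x, N x = 0 -> x = 0) /\
  (forall x y, N (x + y) <= N x + N y) /\
  (forall (c : CC) x, N (c *: x) = ComplexField.Normc.normc c * N x) /\
  (forall x y, N (amul x y) <= N x * N y) /\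
  (forall x, N (amul (astar x) x) = N x ^+ 2).

End SemigroupAlgebra.

Definition is_unital_star_hom (S1 S2 : invMonoid) (f : salg S1 -> salg S2) :=
  [/\ forall x y, f (x + y) = f x + f y,
      forall (c : CC) x, f (c *: x) = c *: f x,
      forall x y, f (amul x y) = amul (f x) (f y),
      f (aone S1) = aone S2 &
      forall x, f (astar x) = astar (f x)].

(* The bicyclic monoid BC = <p, q | pq = e>, p^* = q.                   *)
(* (a, b) represents q^a p^b (normal form).                             *)
Definition bc := (nat * nat)%type.
Definition bc_one : bc := (0, 0)%N.
Definition bc_p : bc := (0, 1)%N.
Definition bc_q : bc := (1, 0)%N.
(* q^a p^b q^c p^d = q^(a + c - min(b,c)) p^(d + b - min(b,c)) *)
Definition bc_mul (x y : bc) : bc :=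
  (addn x.1 (subn y.1 x.2), addn y.2 (subn x.2 y.1)).
Definition bc_star (x : bc) : bc := (x.2, x.1).

(* S_infty : free monoid on {t_n, t_n^* : n in N}.  The letter (k, false)
   stands for t_(k+1) and (k, true) for t_(k+1)^*  (N = {1,2,...}).    *)
Definition gen := (nat * bool)%type.
Definition gen_star (g : gen) : gen := (g.1, ~~ g.2).
Definition sinf := seq gen.
Definition sinf_star (w : sinf) : sinf := rev (map gen_star w).

Definition Sinf : invMonoid := @InvMonoid sinf [::] cat sinf_star.

Definition tgen (k : nat) : sinf := [:: (k, false)].

(* The free product BC * S_infty, as reduced words: sequences of letters
   from (BC \ {e}) u {t_j, t_j^*} with no two consecutive BC letters.  *)
Definition letter := (bc + gen)%type.
Definition isBC (l : letter) : bool := if l is inl _ then true else false.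

Fixpoint reduced (s : seq letter) : bool :=
  match s with
  | [::] => true
  | l :: s' =>
      [&& l != inl bc_one,
          (if s' is l' :: _ then ~~ (isBC l && isBC l') else true)
        & reduced s']
  end.

Definition bcs := {w : seq letter | reduced w}.
HB.instance Definition _ := Choice.on bcs.

Definition bcs_one : bcs := exist _ [::] erefl.

Definition wmul (s t : seq letter) : seq letter :=
  match rev s, t with
  | inl x :: rs, inl y :: t1 =>
      let z := bc_mul x y in
      catrev rs ((if z == bc_one then [::] else [:: inl z]) ++ t1)
  | _, _ => s ++ t
  end.

Definition letter_star (l : letter) : letter :=
  match l with inl x => inl (bc_star x) | inr g => inr (gen_star g) end.

Definition wstar (s : seq letter) : seq letter := rev (map letter_star s).

(* wmul and wstar preserve reducedness, so insubd never uses its default *)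
Definition bcs_mul (u v : bcs) : bcs := insubd bcs_one (wmul (val u) (val v)).
Definition bcs_star (u : bcs) : bcs := insubd bcs_one (wstar (val u)).

Definition BCS : invMonoid := @InvMonoid bcs bcs_one bcs_mul bcs_star.

Definition bcs_len (u : bcs) : nat := size (val u).
Definition sinf_len (w : sinf) : nat := size w.

Definition bcs_p : bcs := insubd bcs_one [:: inl bc_p].
Definition sinf_to_bcs (w : sinf) : bcs := insubd bcs_one (map inr w).

(* gamma_n = (n ||delta_(t_n)||)^-1 and a_n = delta_p + gamma_n delta_(t_n),
   for n = k+1 *)
Definition gamma (N : salg BCS -> Rr) (k : nat) : Rr :=
  ((k.+1)%:R * N (@delta BCS (sinf_to_bcs (tgen k))))^-1.

Definition a_gen (N : salg BCS -> Rr) (k : nat) : salg BCS :=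
  @delta BCS bcs_p + ((gamma N k)%:C)%C *: @delta BCS (sinf_to_bcs (tgen k)).

From HB Require Import structures.
From mathcomp Require Import all_boot all_order all_algebra.
From mathcomp Require Import finmap monalg complex Rstruct.
From Stdlib Require Rdefinitions.

(* Induct on y in S_infty by appending one letter g at a time.  phi(delta_g)
   is delta_b + c delta_g with b = p or q and c a nonzero multiple of a gamma
   (nonzero because a C*-norm is definite).  Right multiplication by delta_b
   raises the length by at most one, and can only land in S_infty when b merges
   into a trailing BC letter, which does not raise the length; right
   multiplication by delta_g appends g injectively.  So phi(delta_y) is
   supported on words of length <= |y|, and among the words of S_infty of
   length |y| its coefficient is nonzero exactly at y. *)

Set Implicit Arguments.
Unset Strict Implicit.
Unset Printing Implicit Defensive.

Import Order.TTheory GRing.Theory Num.Theory.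
Local Open Scope ring_scope.

Section SemigroupAlgebraTheory.
Variable S : invMonoid.
Implicit Types (f g : salg S) (s t k : S) (c : CC).

Lemma monalgUZ k c (x : CC) : mkmalgU k (c * x) = c *: mkmalgU k x :> salg S.
Proof. by apply/malgP=> k'; rewrite mcoeffZ !mcoeffU mulrnAr. Qed.

Lemma msupp_delta s : msupp (delta s) = [fset s]%fset.
Proof. by rewrite msuppU oner_eq0. Qed.

Lemma amulEw (d1 d2 : {fset S}) f g :
  (msupp f `<=` d1)%fset -> (msupp g `<=` d2)%fset ->
  amul f g = \sum_(s <- d1) \sum_(t <- d2) mkmalgU (im_mul s t) (f@_s * g@_t).
Proof.
move=> le_f le_g; rewrite /amul (big_fset_incl _ le_f) /=.
  apply/eq_bigr=> s _; apply/big_fset_incl => // t _ /mcoeff_outdom ->.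
  by rewrite mulr0 monalgU0.
move=> s _ /mcoeff_outdom f_s.
by rewrite big1 => // t _; rewrite f_s mul0r monalgU0.
Qed.

Lemma amulDr f g1 g2 : amul f (g1 + g2) = amul f g1 + amul f g2.
Proof.
pose d := (msupp g1 `|` msupp g2)%fset.
rewrite !(@amulEw (msupp f) d) ?msuppD_le ?fsubsetUl ?fsubsetUr //.
rewrite -big_split /=.
apply: eq_bigr => s _; rewrite -big_split /=; apply: eq_bigr => t _.
by rewrite mcoeffD mulrDr monalgUD.
Qed.

Lemma amulZr c f g : amul f (c *: g) = c *: amul f g.
Proof.
rewrite (@amulEw (msupp f) (msupp g)) ?msuppZ_le // /amul scaler_sumr.
apply: eq_bigr => s _; rewrite scaler_sumr; apply: eq_bigr => t _.
by rewrite mcoeffZ -monalgUZ mulrCA.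
Qed.

Lemma amul_delta s t : amul (delta s) (delta t) = delta (im_mul s t).
Proof. by rewrite /amul !msupp_delta !big_seq_fset1 !mcoeffUU mulr1. Qed.

Lemma mcoeff_amul_delta f t k :
  (amul f (delta t))@_k = \sum_(s <- msupp f) f@_s * (im_mul s t == k)%:R.
Proof.
rewrite /amul msupp_delta raddf_sum; apply: eq_bigr => s _.
by rewrite /= big_seq_fset1 mcoeffUU mulr1 mcoeffU mulr_natr.
Qed.

Lemma mcoeff_amul_delta_eq0 f t k :
  {in msupp f, forall s, im_mul s t != k} -> (amul f (delta t))@_k = 0.
Proof.
move=> none; rewrite mcoeff_amul_delta big1_seq // => s /andP[_ /none].
by move/negbTE->; rewrite mulr0.
Qed.

Lemma mcoeff_amul_delta_inj f t k s0 :
  (forall s, (im_mul s t == k) = (s == s0)) -> (amul f (delta t))@_k = f@_s0.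
Proof.
move=> eq_k; rewrite [in RHS](monalgE f) mcoeff_amul_delta raddf_sum.
by apply: eq_bigr => s _; rewrite /= eq_k mcoeffU mulr_natr.
Qed.

Lemma msupp_amul_delta f t k : k \in msupp (amul f (delta t)) ->
  exists2 s, s \in msupp f & k = im_mul s t.
Proof.
rewrite -mcoeff_neq0 => nz.
have /hasP[s f_s /eqP <-] : has (fun s => im_mul s t == k) (msupp f).
  by apply: contraNT nz => /hasPn /mcoeff_amul_delta_eq0 ->.
by exists s.
Qed.

Lemma astarEw (d : {fset S}) f : (msupp f `<=` d)%fset ->
  astar f = \sum_(s <- d) mkmalgU (im_star s) (f@_s)^*.
Proof.
move=> le_f; rewrite /astar (big_fset_incl _ le_f) //.
by move=> s _ /mcoeff_outdom ->; rewrite conjC0 monalgU0.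
Qed.

Lemma astarD f g : astar (f + g) = astar f + astar g.
Proof.
pose d := (msupp f `|` msupp g)%fset.
rewrite !(@astarEw d) ?msuppD_le ?fsubsetUl ?fsubsetUr // -big_split /=.
by apply: eq_bigr => s _; rewrite mcoeffD rmorphD monalgUD.
Qed.

Lemma astarZ c f : astar (c *: f) = c^* *: astar f.
Proof.
rewrite (@astarEw (msupp f)) ?msuppZ_le // /astar scaler_sumr.
by apply: eq_bigr => s _; rewrite mcoeffZ rmorphM monalgUZ.
Qed.

Lemma astar_delta s : astar (delta s) = delta (im_star s).
Proof. by rewrite /astar msupp_delta big_seq_fset1 mcoeffUU conjC1. Qed.

Lemma in_span_msupp (P : pred S) f : {subset msupp f <= P} -> in_span P f.
Proof.
move=> fP; exists [seq (f@_s, s) | s <- msupp f]; split.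
  by move=> _ /mapP[s /fP Ps ->].
rewrite big_map {1}(monalgE f).
by apply: eq_bigr => s _; rewrite -monalgUZ mulr1.
Qed.

End SemigroupAlgebraTheory.

Lemma reduced_map_inr (w : sinf) : reduced (map inr w).
Proof. by elim: w => [|g [|g' w] IH]. Qed.

Lemma val_sinf_to_bcs (w : sinf) : val (sinf_to_bcs w) = map inr w.
Proof. by rewrite val_insubd reduced_map_inr. Qed.

Lemma bcs_len_sinf (w : sinf) : bcs_len (sinf_to_bcs w) = size w.
Proof. by rewrite /bcs_len val_sinf_to_bcs size_map. Qed.

Lemma reduced_rcons_inr s g : reduced s -> reduced (rcons s (inr g)).
Proof.
elim: s => [|l s IH] //= /and3P[l_neq1 no_bc_pair red_s].
rewrite l_neq1 IH //.
by case: s {IH red_s} no_bc_pair => [|l' s] //=; rewrite ?andbF ?andbT.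
Qed.

Lemma val_bcs_mul_inr (u : bcs) g :
  val (bcs_mul u (sinf_to_bcs [:: g])) = rcons (val u) (inr g).
Proof.
have wmul_inr : wmul (val u) [:: inr g] = rcons (val u) (inr g).
  by rewrite /wmul -cats1; case: (rev _) => [|[]].
rewrite val_insubd val_sinf_to_bcs /= wmul_inr.
by rewrite reduced_rcons_inr //; exact: valP.
Qed.

Lemma bcs_len_mul_inr (u : bcs) g :
  bcs_len (bcs_mul u (sinf_to_bcs [:: g])) = (bcs_len u).+1.
Proof. by rewrite /bcs_len val_bcs_mul_inr size_rcons. Qed.

Lemma eq_bcs_mul_inr (u : bcs) g z g' :
  (bcs_mul u (sinf_to_bcs [:: g]) == sinf_to_bcs (rcons z g')) =
  (u == sinf_to_bcs z) && (g == g').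
Proof.
rewrite -val_eqE val_bcs_mul_inr !val_sinf_to_bcs map_rcons eqseq_rcons.
by rewrite -val_sinf_to_bcs val_eqE.
Qed.

Lemma val_bcs_mul_bc (u B : bcs) x : val B = [:: inl x] ->
  (size (val (bcs_mul u B)) <= size (val u))%N \/
  val (bcs_mul u B) = rcons (val u) (inl x).
Proof.
move=> B_x; rewrite val_insubd B_x; case: ifP => _; last by left.
rewrite /wmul -cats1.
case E: (rev _) => [|[y|y] rs]; [by right | left | by right].
rewrite catrevE size_cat size_rev -(size_rev (val u)) E /=.
by case: ifP => _; rewrite ?addn0 ?addn1.
Qed.

Lemma bcs_len_mul_bc (u B : bcs) x : val B = [:: inl x] ->
  (bcs_len (bcs_mul u B) <= (bcs_len u).+1)%N.
Proof.
rewrite /bcs_len => B_x.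
by case: (val_bcs_mul_bc u B_x) => [/leqW | ->] //; rewrite size_rcons.
Qed.

Lemma bcs_mul_bc_neq_sinf (u B : bcs) x w : val B = [:: inl x] ->
  (bcs_len u < size w)%N -> bcs_mul u B != sinf_to_bcs w.
Proof.
move=> B_x lt_u_w; apply/eqP => uB_w.
case: (val_bcs_mul_bc u B_x); rewrite uB_w val_sinf_to_bcs.
  by rewrite size_map leqNgt lt_u_w.
by move/(congr1 (fun s => inl x \in s)); rewrite mem_rcons mem_head => /mapP[].
Qed.

Definition L_bcs (n : nat) : pred BCS := fun u => (bcs_len u <= n)%N.

Lemma msupp_amul_delta_len (f : salg BCS) t n :
  (forall u, bcs_len (bcs_mul u t) <= (bcs_len u).+1)%N ->
  {subset msupp f <= L_bcs n} ->
  {subset msupp (amul f (@delta BCS t)) <= L_bcs n.+1}.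
Proof.
move=> t_len f_n _ /msupp_amul_delta[u /f_n u_n ->].
exact: leq_trans (t_len u) _.
Qed.

Lemma mcoeff_amul_bc_sinf (f : salg BCS) B x n w : val B = [:: inl x] ->
  {subset msupp f <= L_bcs n} -> (n < size w)%N ->
  (amul f (@delta BCS B))@_(sinf_to_bcs w) = 0.
Proof.
move=> B_x f_n lt_n_w; apply: (@mcoeff_amul_delta_eq0 BCS) => u /f_n u_n.
exact: bcs_mul_bc_neq_sinf B_x (leq_ltn_trans u_n lt_n_w).
Qed.

Lemma mcoeff_amul_inr (f : salg BCS) g z g' :
  (amul f (@delta BCS (sinf_to_bcs [:: g])))@_(sinf_to_bcs (rcons z g')) =
  f@_(sinf_to_bcs z) * (g == g')%:R.
Proof.
have [<-|neq_g] := eqVneq g g'.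
  rewrite mulr1; apply: (@mcoeff_amul_delta_inj BCS) => u.
  by rewrite eq_bcs_mul_inr eqxx andbT.
rewrite mulr0; apply: (@mcoeff_amul_delta_eq0 BCS) => u _.
by rewrite eq_bcs_mul_inr (negbTE neq_g) andbF.
Qed.

Lemma val_bcs_p : val bcs_p = [:: inl bc_p].
Proof. by rewrite val_insubd. Qed.

Lemma val_bcs_star_p : val (bcs_star bcs_p) = [:: inl bc_q].
Proof. by rewrite val_insubd val_bcs_p. Qed.

Lemma bcs_star_sinf (w : sinf) :
  bcs_star (sinf_to_bcs w) = sinf_to_bcs (sinf_star w).
Proof.
have wstar_inr : wstar (map inr w) = map inr (sinf_star w).
  by rewrite /wstar /sinf_star map_rev -!map_comp.
apply: val_inj.
by rewrite val_insubd !val_sinf_to_bcs wstar_inr reduced_map_inr.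
Qed.

Lemma gamma_neq0 N k : is_Cstar_norm N -> gamma N k != 0.
Proof.
case=> _ [definite _]; rewrite invr_eq0 mulf_eq0 negb_or pnatr_eq0 /=.
apply: contra_neq (oner_neq0 CC) => /definite /eqP.
by rewrite monalgU_eq0 => /eqP.
Qed.

Section UnitalStarHom.
Variables (N : salg BCS -> Rdefinitions.R) (phi : salg Sinf -> salg BCS).
Hypotheses (HN : is_Cstar_norm N) (Hphi : is_unital_star_hom phi)
  (Hphi_t : forall k : nat, phi (@delta Sinf (tgen k)) = a_gen N k).

Lemma phi_letter g : exists B x c,
  [/\ val B = [:: inl x], c != 0 &
      phi (@delta Sinf [:: g]) =
        @delta BCS B + c *: @delta BCS (sinf_to_bcs [:: g])].
Proof.
have gamma_neq0C k : ((gamma N k)%:C)%C != 0 :> CC.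
  by rewrite eq_complex /= negb_and (gamma_neq0 k HN).
case: g => k [].
- exists (bcs_star bcs_p), bc_q, ((gamma N k)%:C)%C^*.
  rewrite val_bcs_star_p conjC_eq0 gamma_neq0C; split=> //.
  have [_ _ _ _ phi_star] := Hphi.
  rewrite -[[:: (k, true)]]/(@im_star Sinf (tgen k)) -astar_delta.
  rewrite phi_star Hphi_t.
  (* [by] diverges: its [eq_refl] attempt unfolds the real-number instances. *)
  rewrite astarD astarZ !astar_delta -bcs_star_sinf; reflexivity.
- exists bcs_p, bc_p, ((gamma N k)%:C)%C.
  by rewrite val_bcs_p gamma_neq0C Hphi_t.
Qed.

Lemma phi_delta_structure y :
  {subset msupp (phi (@delta Sinf y)) <= L_bcs (size y)} /\
  forall z, size z = size y ->
    ((phi (@delta Sinf y))@_(sinf_to_bcs z) != 0) = (z == y).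
Proof.
have [_ _ phiM phi1 _] := Hphi.
elim/last_ind: y => [|y g [y_supp y_coef]].
  have one_sinf : sinf_to_bcs [::] = bcs_one.
    by apply: val_inj; rewrite val_sinf_to_bcs.
  rewrite [phi _]phi1; split.
    by move=> u; rewrite msupp_delta inE => /eqP ->.
  by case=> [_|//]; rewrite one_sinf mcoeffUU oner_neq0.
have [B [x [c [B_x c_neq0 phi_g]]]] := phi_letter g.
have -> : @delta Sinf (rcons y g) = amul (@delta Sinf y) (@delta Sinf [:: g]).
  by rewrite amul_delta -cats1.
rewrite phiM phi_g amulDr amulZr size_rcons; split.
  move=> u /(fsubsetP (msuppD_le _ _)); rewrite inE => /orP[].
    exact: msupp_amul_delta_len (fun u => bcs_len_mul_bc u B_x) y_supp u.
  move=> /(fsubsetP (msuppZ_le _ _)).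
  exact: msupp_amul_delta_len (fun u => eq_leq (bcs_len_mul_inr u g)) y_supp u.
case/lastP => [|z g'] //; rewrite size_rcons => -[size_z].
rewrite mcoeffD mcoeffZ (mcoeff_amul_bc_sinf B_x y_supp) ?size_rcons ?size_z //.
rewrite add0r mcoeff_amul_inr !mulf_eq0 !negb_or c_neq0 y_coef //.
rewrite pnatr_eq0 eqb0 negbK.
by rewrite eqseq_rcons (eq_sym g').
Qed.

End UnitalStarHom.

Theorem lemma3p2
  (N : salg BCS -> Rdefinitions.R) (HN : is_Cstar_norm N)
  (phi : salg Sinf -> salg BCS) (Hphi : is_unital_star_hom phi)
  (Hphi_t : forall k : nat, phi (@delta Sinf (tgen k)) = a_gen N k)
  (w : sinf) (m : nat) (Hw : sinf_len w = m) :
  in_span (fun u : BCS => (bcs_len u <= m)%N) (phi (@delta Sinf w)) /\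
  (forall y : sinf, (sinf_len y <= m)%N ->
     (@dual_delta BCS (sinf_to_bcs w) (phi (@delta Sinf y)) != 0 <-> y = w)).
Proof.
have structure := phi_delta_structure HN Hphi Hphi_t.
rewrite /sinf_len /dual_delta in Hw *; subst m.
split; first exact/in_span_msupp/(structure w).1.
move=> y; rewrite leq_eqVlt => /orP[/eqP size_y | lt_y_w].
  by rewrite (structure y).2 // eq_sym; split=> [/eqP | ->].
rewrite mcoeff_outdom ?eqxx; last first.
  apply: contraTN lt_y_w => /(structure y).1 w_len.
  by rewrite -leqNgt -bcs_len_sinf; exact: w_len.
by split=> // y_w; rewrite y_w ltnn in lt_y_w.
Qed.
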